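(* Let $\lambda_{\min}<\lambda_{\max}$ and let $h\colon\mathbb{R}\to\mathbb{R}$ be continuous and $(\lambda_{\max}-\lambda_{\min})$-periodic, having only one maximum point on $[\lambda_{\min},\lambda_{\max})$ (i.e. on one period). Let $\mathcal{F}$ be the generalized von Mises family generated by $h$, consisting of the functions on $[\lambda_{\min},\lambda_{\max}]$ \[ f_{a,b,s}(\lambda)=\exp\bigl(b+a\,h(\lambda-s)\bigr),\qquad a\ge 0,\ b\in\mathbb{R},\ s\in\mathbb{R}. \] Assume $\mathcal{F}$ is closed under pointwise multiplication. Then $\mathcal{F}$ is the von Mises family, i.e. one can take $h(\lambda)=\cos\frac{2\pi\lambda}{\lambda_{\max}-\lambda_{\min}}$ (the family $\mathcal{F}$ coincides with $\{\exp(b+a\cos\frac{2\pi(\lambda-s)}{\lambda_{\max}-\lambda_{\min}}):a\ge0,\,b,s\in\mathbb{R}\}$). *)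

From Stdlib Require Import Reals.
Open Scope R_scope.

Definition gvM_family (lmin lmax : R) (h : R -> R) (f : R -> R) : Prop :=
  exists a b s : R, 0 <= a /\
    forall lam, lmin <= lam <= lmax -> f lam = exp (b + a * h (lam - s)).

Definition unique_max_on_period (lmin lmax : R) (h : R -> R) : Prop :=
  exists! x0 : R, (lmin <= x0 < lmax) /\
    (forall y, lmin <= y < lmax -> h y <= h x0).

Definition mult_closed (F : (R -> R) -> Prop) : Prop :=
  forall f g, F f -> F g -> F (fun lam => f lam * g lam).

Definition vM_cos (lmin lmax : R) (lam : R) : R :=
  cos (2 * PI * lam / (lmax - lmin)).

From Stdlib Require Import Reals Lra Lia.
Open Scope R_scope.

(* Let T = lmax - lmin. Multiplying two members of the family shows that the
   translates a h(. - s), a >= 0, are closed under addition up to additive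
   constants. Since h + h(. + T/2) has period T/2 while h has a unique maximum per
   period, that sum must be constant; centring h at its maximum and removing this
   constant gives a T-periodic, T/2-antiperiodic k, maximal exactly on TZ, whose
   translates a k(. + t) form a convex cone. The autocorrelation
   sum_j k(jT/N) k(x + jT/N) lies in that cone and is even and maximal at 0 on the
   grid (T/N)Z, so k is symmetric about a point that tends to 0 as N grows: k is
   even. Evenness turns k(x + s) + k(x - s) = a k(x + t) into d'Alembert's equation
   k(x + s) + k(x - s) = 2 k(s) k(x) / k(0); together with k(T/2) = -k(0) and
   k >= 0 on [0, T/4], the half-angle and Chebyshev recursions give
   k = k(0) cos(2 pi x / T) on the dyadic multiples of T, hence everywhere. *)

Lemma exists_floor_multiple (d y : R) : 0 < d -> exists m : Z, IZR m * d <= y < IZR m * d + d.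
Proof.
  intros Hd. destruct (archimed (y / d)) as [Hgt Hle].
  exists (up (y / d) - 1)%Z. rewrite minus_IZR.
  assert (Hy : y = y / d * d) by (field; lra).
  set (r := y / d) in *. rewrite Hy. split; nra.
Qed.

Lemma periodic_Z (f : R -> R) (T : R) :
  (forall x, f (x + T) = f x) -> forall (j : Z) x, f (x + IZR j * T) = f x.
Proof.
  intros Hp j. induction j using Z.peano_ind; intros x.
  - f_equal. ring.
  - rewrite succ_IZR, <- (IHj x), <- (Hp (x + IZR j * T)). f_equal. ring.
  - rewrite <- Z.sub_1_r, minus_IZR, <- (IHj x), <- (Hp (x + (IZR j - 1) * T)). f_equal. ring.
Qed.

Lemma periodic_ext (a T : R) (F G : R -> R) : 0 < T ->
  (forall x, F (x + T) = F x) -> (forall x, G (x + T) = G x) ->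
  (forall x, a <= x <= a + T -> F x = G x) -> forall x, F x = G x.
Proof.
  intros HT HF HG HFG x. destruct (exists_floor_multiple T (x - a) HT) as [j Hj].
  replace x with ((x - IZR j * T) + IZR j * T) by ring.
  rewrite (periodic_Z F T HF), (periodic_Z G T HG). apply HFG. lra.
Qed.

Lemma half_period_not_period (T : R) (j : Z) : 0 < T -> T / 2 <> IZR j * T.
Proof.
  intros HT E. assert (Hj : IZR (2 * j) = IZR 1).
  { rewrite mult_IZR. apply (Rmult_eq_reg_r T); [|lra]. simpl. lra. }
  apply eq_IZR in Hj. lia.
Qed.

Lemma exists_div_INR_lt (T e : R) : 0 < T -> 0 < e -> exists n : nat, T / INR (S n) < e.
Proof.
  intros HT He. destruct (archimed_cor1 (e / T)) as [[|n] [Hn Hpos]].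
  - apply Rdiv_lt_0_compat; lra.
  - lia.
  - exists n. assert (0 < INR (S n)) by (apply lt_0_INR; lia).
    apply (Rmult_lt_compat_l T) in Hn; [|lra].
    replace (T * (e / T)) with e in Hn by (field; lra). exact Hn.
Qed.

Lemma exists_div_pow2_lt (T e : R) : 0 < e -> exists p : nat, T / 2 ^ p < e.
Proof.
  intros He. destruct (cv_pow_half T e He) as [p Hp]. exists p.
  specialize (Hp p (le_n p)). unfold Rdist in Hp. rewrite Rminus_0_r in Hp.
  apply Rabs_def2 in Hp. lra.
Qed.

Lemma continuity_pt_eps (f : R -> R) (x : R) : continuity_pt f x ->
  forall e, 0 < e -> exists d, 0 < d /\ forall y, Rabs (y - x) < d -> Rabs (f y - f x) < e.
Proof.
  intros Hc e He. destruct (Hc e He) as [d [Hd H]]. exists d. split; [exact Hd|].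
  intros y Hy. destruct (Req_dec y x) as [->|Hne].
  - rewrite Rminus_diag, Rabs_R0. exact He.
  - apply (H y). split; [split; [exact I | auto] | exact Hy].
Qed.

Lemma eq_of_approx (f g : R -> R) (x y : R) :
  continuity_pt f x -> continuity_pt g y ->
  (forall d, 0 < d -> exists u v, Rabs (u - x) < d /\ Rabs (v - y) < d /\ f u = g v) ->
  f x = g y.
Proof.
  intros Hf Hg Happrox. destruct (Req_dec (f x) (g y)) as [E|E]; [exact E|]. exfalso.
  set (e := Rabs (f x - g y) / 2).
  assert (He : 0 < e) by (apply Rdiv_lt_0_compat; [apply Rabs_pos_lt|]; lra).
  destruct (continuity_pt_eps f x Hf e He) as [d1 [Hd1 C1]].
  destruct (continuity_pt_eps g y Hg e He) as [d2 [Hd2 C2]].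
  destruct (Happrox (Rmin d1 d2)) as (u & v & Hu & Hv & Huv); [apply Rmin_pos; lra|].
  specialize (C1 u (Rlt_le_trans _ _ _ Hu (Rmin_l _ _))).
  specialize (C2 v (Rlt_le_trans _ _ _ Hv (Rmin_r _ _))).
  rewrite Huv, Rabs_minus_sym in C1.
  pose proof (Rabs_triang (f x - g v) (g v - g y)) as Htri.
  replace (f x - g v + (g v - g y)) with (f x - g y) in Htri by ring.
  unfold e in *. lra.
Qed.

Lemma eq_on_dyadics (f g : R -> R) (T : R) : 0 < T -> continuity f -> continuity g ->
  (forall (m : Z) (p : nat), f (IZR m * (T / 2 ^ p)) = g (IZR m * (T / 2 ^ p))) ->
  forall x, f x = g x.
Proof.
  intros HT Hf Hg Hdy x. apply eq_of_approx; [apply Hf | apply Hg |].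
  intros d Hd. destruct (exists_div_pow2_lt T d Hd) as [p Hp].
  assert (Hstep : 0 < T / 2 ^ p) by (apply Rdiv_lt_0_compat; [|apply pow_lt]; lra).
  destruct (exists_floor_multiple (T / 2 ^ p) x Hstep) as [m Hm].
  exists (IZR m * (T / 2 ^ p)), (IZR m * (T / 2 ^ p)).
  assert (Rabs (IZR m * (T / 2 ^ p) - x) < d) by (rewrite Rabs_left1; lra).
  auto.
Qed.

Lemma sum_periodic_shift1 (G : R -> R) (n : nat) :
  (forall r, G (r + INR (S n)) = G r) ->
  sum_f_R0 (fun j => G (INR j + 1)) n = sum_f_R0 (fun j => G (INR j)) n.
Proof.
  intros G_periodic. pose proof (tech5 (fun j => G (INR j)) n) as Hlast.
  pose proof (decomp_sum (fun j => G (INR j)) (S n) (Nat.lt_0_succ n)) as Hfirst.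
  simpl pred in Hfirst. rewrite Hlast in Hfirst.
  rewrite <- (Rplus_0_l (INR (S n))), G_periodic in Hfirst. change (INR 0) with 0 in Hfirst.
  rewrite (sum_eq _ (fun j => G (INR (S j)))); [lra|].
  intros j _. now rewrite S_INR.
Qed.

Lemma sum_periodic_shift (G : R -> R) (n : nat) :
  (forall r, G (r + INR (S n)) = G r) ->
  forall m : Z, sum_f_R0 (fun j => G (INR j + IZR m)) n = sum_f_R0 (fun j => G (INR j)) n.
Proof.
  intros HG m. induction m using Z.peano_ind.
  - apply sum_eq. intros j _. now rewrite Rplus_0_r.
  - rewrite <- IHm, <- (sum_periodic_shift1 (fun r => G (r + IZR m))).
    + apply sum_eq. intros j _. rewrite succ_IZR. f_equal. ring.
    + intros r. rewrite <- (HG (r + IZR m)). f_equal. ring.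
  - rewrite <- IHm, <- (sum_periodic_shift1 (fun r => G (r + IZR (Z.pred m)))).
    + apply sum_eq. intros j _. rewrite <- Z.sub_1_r, minus_IZR. f_equal. ring.
    + intros r. rewrite <- (HG (r + IZR (Z.pred m))). f_equal. ring.
Qed.

Definition autocorr (F : R -> R) (n : nat) (c : R) : R :=
  sum_f_R0 (fun j => F (INR j) * F (INR j + c)) n.

Section Autocorrelation.
Variables (F : R -> R) (n : nat).
Hypothesis F_periodic : forall r, F (r + INR (S n)) = F r.

Lemma autocorr_opp (m : Z) : autocorr F n (- IZR m) = autocorr F n (IZR m).
Proof.
  set (G := fun r => F (r - IZR m) * F r).
  assert (HG : forall r, G (r + INR (S n)) = G r).
  { intros r. unfold G. rewrite <- (F_periodic (r - IZR m)), <- (F_periodic r).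
    f_equal; f_equal; ring. }
  unfold autocorr. transitivity (sum_f_R0 (fun j => G (INR j)) n).
  - apply sum_eq. intros j _. unfold G. rewrite Rmult_comm. f_equal; f_equal; ring.
  - rewrite <- (sum_periodic_shift G n HG m). apply sum_eq. intros j _. unfold G.
    f_equal; f_equal; ring.
Qed.

Lemma autocorr_le (m : Z) : autocorr F n (IZR m) <= autocorr F n 0.
Proof.
  set (Sq := fun r => F r * F r).
  assert (HSq : forall r, Sq (r + INR (S n)) = Sq r) by (intros r; unfold Sq; now rewrite F_periodic).
  assert (H0 : autocorr F n 0 = sum_f_R0 (fun j => Sq (INR j)) n).
  { apply sum_eq. intros j _. unfold Sq. now rewrite Rplus_0_r. }
  rewrite H0. unfold autocorr.
  apply Rle_trans with (sum_f_R0 (fun j => Sq (INR j) / 2 + Sq (INR j + IZR m) / 2) n).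
  - apply sum_Rle. intros j _. pose proof (Rle_0_sqr (F (INR j) - F (INR j + IZR m))).
    unfold Sq, Rsqr in *. lra.
  - unfold Rdiv. rewrite plus_sum, <- !scal_sum, (sum_periodic_shift Sq n HSq m). lra.
Qed.

End Autocorrelation.

Lemma autocorr_0_ge (F : R -> R) (n : nat) : F 0 * F 0 <= autocorr F n 0.
Proof.
  unfold autocorr. induction n as [|n IH].
  - simpl. rewrite Rplus_0_r. lra.
  - rewrite tech5, Rplus_0_r. pose proof (Rle_0_sqr (F (INR (S n)))). unfold Rsqr in *. lra.
Qed.

Section DAlembert.
Variables (phi : R -> R) (K : R).
Hypothesis K_pos : 0 < K.
Hypothesis phi_0 : phi 0 = K.
Hypothesis phi_dalembert : forall x s, phi (x + s) + phi (x - s) = 2 * phi s * phi x / K.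

Lemma dalembert_even (x : R) : phi (- x) = phi x.
Proof.
  pose proof (phi_dalembert 0 x) as D. rewrite phi_0, Rplus_0_l, Rminus_0_l in D.
  assert (E : 2 * phi x * K / K = 2 * phi x) by (field; lra). lra.
Qed.

Lemma dalembert_half (y th : R) : 0 <= phi y -> 0 <= cos th ->
  phi (2 * y) = K * cos (2 * th) -> phi y = K * cos th.
Proof.
  intros Hy Hcos H2.
  pose proof (phi_dalembert y y) as D.
  replace (y + y) with (2 * y) in D by ring. rewrite Rminus_diag, phi_0, H2, cos_2a_cos in D.
  apply Rsqr_inj; [exact Hy | apply Rmult_le_pos; lra |].
  apply (Rmult_eq_reg_r (2 / K)); [|apply Rgt_not_eq, Rdiv_lt_0_compat; lra].
  unfold Rsqr. replace (phi y * phi y * (2 / K)) with (2 * phi y * phi y / K) by (field; lra).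
  rewrite <- D. field. lra.
Qed.

Lemma dalembert_mult_nat (y th : R) : phi y = K * cos th ->
  forall m : nat, phi (INR m * y) = K * cos (INR m * th).
Proof.
  intros Hy.
  assert (H : forall m : nat, phi (INR m * y) = K * cos (INR m * th) /\
                              phi (INR (S m) * y) = K * cos (INR (S m) * th)).
  { induction m as [|m [Hm HSm]].
    - simpl. rewrite !Rmult_0_l, !Rmult_1_l, cos_0, Rmult_1_r. auto.
    - split; [exact HSm|].
      pose proof (phi_dalembert (INR (S m) * y) y) as D.
      replace (INR (S m) * y + y) with (INR (S (S m)) * y) in D by (rewrite (S_INR (S m)); ring).
      replace (INR (S m) * y - y) with (INR m * y) in D by (rewrite S_INR; ring).
      rewrite Hm, HSm, Hy in D.
      replace (INR (S (S m)) * th) with (INR (S m) * th + th) by (rewrite (S_INR (S m)); ring).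
      replace (INR m * th) with (INR (S m) * th - th) in D by (rewrite S_INR; ring).
      rewrite cos_minus in D. rewrite cos_plus.
      apply (Rplus_eq_reg_r (K * (cos (INR (S m) * th) * cos th + sin (INR (S m) * th) * sin th))).
      rewrite D. field. lra. }
  intros m. apply H.
Qed.

Lemma dalembert_mult (y th : R) : phi y = K * cos th ->
  forall m : Z, phi (IZR m * y) = K * cos (IZR m * th).
Proof.
  intros Hy m. destruct (Z.le_ge_cases 0 m) as [Hm|Hm].
  - rewrite <- (Znat.Z2Nat.id m Hm), <- INR_IZR_INZ. now apply dalembert_mult_nat.
  - rewrite <- (Z.opp_involutive m), <- (Znat.Z2Nat.id (- m)) by lia.
    rewrite opp_IZR, <- INR_IZR_INZ, Ropp_mult_distr_l_reverse, dalembert_even,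
      Ropp_mult_distr_l_reverse, cos_neg.
    now apply dalembert_mult_nat.
Qed.

End DAlembert.

Lemma div_pow2_bounds (a : R) (n : nat) : 0 <= a -> 0 <= a / 2 ^ n <= a.
Proof.
  intros Ha. assert (H1 : 1 <= 2 ^ n) by (apply pow_R1_Rle; lra).
  assert (E : a / 2 ^ n * 2 ^ n = a) by (field; apply pow_nonzero; lra).
  assert (0 <= a / 2 ^ n).
  { apply Rmult_le_pos; [lra | left; apply Rinv_0_lt_compat, pow_lt; lra]. }
  split; nra.
Qed.

Definition scaled_shift (k v : R -> R) : Prop :=
  exists a t, 0 <= a /\ forall x, v x = a * k (x + t).

Section NormalizedGenerator.
Variables (T : R) (k : R -> R).
Hypothesis T_pos : 0 < T.
Hypothesis k_cont : continuity k.
Hypothesis k_periodic : forall x, k (x + T) = k x.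
Hypothesis k_antiperiodic : forall x, k (x + T / 2) = - k x.
Hypothesis k_le_k0 : forall x, k x <= k 0.
Hypothesis k_max_at_periods : forall z, k z = k 0 -> exists j : Z, z = IZR j * T.
Hypothesis k_cone_add : forall v w, scaled_shift k v -> scaled_shift k w ->
  scaled_shift k (fun x => v x + w x).

Lemma k0_pos : 0 < k 0.
Proof.
  pose proof (k_le_k0 (0 + T / 2)) as H. rewrite k_antiperiodic in H.
  destruct (Req_dec (k 0) 0) as [E|E]; [|lra].
  destruct (k_max_at_periods (0 + T / 2)) as [j Hj].
  - rewrite k_antiperiodic. lra.
  - exfalso. apply (half_period_not_period T j T_pos). lra.
Qed.

Lemma k_near_max (d : R) : 0 < d <= T / 2 ->
  exists g, 0 < g /\ forall z, k 0 - g < k z -> exists j : Z, Rabs (z - IZR j * T) < d.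
Proof.
  intros Hd.
  destruct (continuity_ab_maj k d (T - d)) as [M [HM HMd]]; [lra | intros; apply k_cont |].
  assert (HkM : k M < k 0).
  { destruct (Rle_lt_or_eq_dec _ _ (k_le_k0 M)) as [|E]; [assumption|].
    destruct (k_max_at_periods M E) as [j Hj]. exfalso.
    assert (H0 : 0 < IZR j) by (apply (Rmult_lt_reg_r T); lra).
    assert (H1 : IZR j < 1) by (apply (Rmult_lt_reg_r T); lra).
    apply lt_IZR in H0, H1. lia. }
  exists (k 0 - k M). split; [lra|].
  intros z Hz. destruct (exists_floor_multiple T z T_pos) as [j Hj].
  assert (Hkz : k (z - IZR j * T) = k z).
  { rewrite <- (periodic_Z k T k_periodic j (z - IZR j * T)). f_equal. ring. }
  destruct (Rlt_or_le (z - IZR j * T) d).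
  { exists j. rewrite Rabs_right; lra. }
  destruct (Rlt_or_le (T - d) (z - IZR j * T)).
  { exists (j + 1)%Z. rewrite plus_IZR, Rabs_left1; lra. }
  assert (k (z - IZR j * T) <= k M) by (apply HM; lra). lra.
Qed.

Lemma scaled_shift_scale (c u : R) : scaled_shift k (fun x => c * k (x + u)).
Proof.
  destruct (Rle_or_lt 0 c).
  - exists c, u. auto.
  - exists (- c), (u + T / 2). split; [lra|]. intros x.
    replace (x + (u + T / 2)) with (x + u + T / 2) by ring. rewrite k_antiperiodic. ring.
Qed.

Lemma scaled_shift_sum (c u : nat -> R) (n : nat) :
  scaled_shift k (fun x => sum_f_R0 (fun j => c j * k (x + u j)) n).
Proof.
  induction n as [|n IH]; [apply scaled_shift_scale|].
  apply (k_cone_add _ _ IH (scaled_shift_scale (c (S n)) (u (S n)))).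
Qed.

Lemma k_grid_symmetry (n : nat) : exists t,
  (forall m : Z, k (t + IZR m * (T / INR (S n))) = k (t - IZR m * (T / INR (S n)))) /\
  (forall m : Z, k (t + IZR m * (T / INR (S n))) <= k t).
Proof.
  set (d := T / INR (S n)).
  assert (Hd : INR (S n) * d = T) by (unfold d; field; apply not_0_INR; lia).
  set (F := fun r => k (r * d)).
  assert (HF : forall r, F (r + INR (S n)) = F r).
  { intros r. unfold F. rewrite Rmult_plus_distr_r, Hd. apply k_periodic. }
  destruct (scaled_shift_sum (fun j => F (INR j)) (fun j => INR j * d) n) as (a & t & Ha & Hg).
  assert (Hauto : forall c, autocorr F n c = a * k (t + c * d)).
  { intros c. rewrite <- (Rplus_comm (c * d)), <- Hg. apply sum_eq. intros j _.
    unfold F. f_equal. f_equal. ring. }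
  assert (Hapos : 0 < a).
  { pose proof (autocorr_0_ge F n) as H0. pose proof k0_pos.
    rewrite Hauto in H0. unfold F in H0. rewrite Rmult_0_l in H0.
    destruct (Rle_lt_or_eq_dec 0 a Ha) as [|<-]; [assumption|]. nra. }
  exists t. split; intros m.
  - pose proof (autocorr_opp F n HF m) as E. rewrite !Hauto in E.
    apply Rmult_eq_reg_l in E; [|lra]. rewrite <- E. f_equal. ring.
  - pose proof (autocorr_le F n HF m) as E. rewrite !Hauto, Rmult_0_l, Rplus_0_r in E.
    apply Rmult_le_reg_l in E; assumption.
Qed.

Lemma k_symmetry_center_near_0 (e : R) : 0 < e -> exists d z,
  0 < d < e /\ Rabs z < e /\ forall m : Z, k (z + IZR m * d) = k (z - IZR m * d).
Proof.
  intros He.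
  destruct (k_near_max (Rmin e (T / 2))) as [g [Hg Hnear]].
  { split; [apply Rmin_pos | apply Rmin_r]; lra. }
  destruct (continuity_pt_eps k 0 (k_cont 0) g Hg) as [d0 [Hd0 Hcont0]].
  destruct (exists_div_INR_lt T (Rmin d0 e) T_pos) as [n Hn]; [apply Rmin_pos; lra|].
  destruct (k_grid_symmetry n) as [t [Hsym Hmax]].
  set (d := T / INR (S n)) in *.
  assert (Hd : 0 < d) by (apply Rdiv_lt_0_compat; [lra | apply lt_0_INR; lia]).
  pose proof (Rmin_l d0 e). pose proof (Rmin_r d0 e). pose proof (Rmin_l e (T / 2)).
  assert (Ht : k 0 - g < k t).
  { destruct (exists_floor_multiple d t Hd) as [m Hm].
    specialize (Hmax (- m)%Z). rewrite opp_IZR in Hmax.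
    assert (Hnear0 : Rabs (t + - IZR m * d - 0) < d0) by (rewrite Rminus_0_r, Rabs_right; lra).
    apply Hcont0, Rabs_def2 in Hnear0. lra. }
  destruct (Hnear t Ht) as [j Hj].
  exists d, (t - IZR j * T). split; [lra|]. split; [lra|].
  intros m. rewrite <- (periodic_Z k T k_periodic j (t - IZR j * T + IZR m * d)),
    <- (periodic_Z k T k_periodic j (t - IZR j * T - IZR m * d)).
  replace (t - IZR j * T + IZR m * d + IZR j * T) with (t + IZR m * d) by ring.
  replace (t - IZR j * T - IZR m * d + IZR j * T) with (t - IZR m * d) by ring.
  apply Hsym.
Qed.

Lemma k_even (x : R) : k (- x) = k x.
Proof.
  apply eq_of_approx; [apply k_cont | apply k_cont |].
  intros e He.
  destruct (k_symmetry_center_near_0 (e / 2)) as (d & z & [Hd Hde] & Hz & Hsym); [lra|].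
  destruct (exists_floor_multiple d x Hd) as [m Hm]. apply Rabs_def2 in Hz.
  exists (z - IZR m * d), (z + IZR m * d).
  split; [|split]; [apply Rabs_def1; lra .. | symmetry; apply Hsym].
Qed.

Lemma k_symmetry_center (t : R) : (forall y, k (t - y) = k (t + y)) ->
  (forall y, k (y + t) = k y) \/ (forall y, k (y + t) = - k y).
Proof.
  intros Hsym. destruct (k_max_at_periods (t + t)) as [j Hj].
  { rewrite <- Hsym. f_equal. ring. }
  (* t + t is a period, so t is a multiple of T/2 *)
  destruct (Z.Even_or_Odd j) as [[i ->]|[i ->]]; [left|right]; intros y.
  - rewrite mult_IZR in Hj. replace (y + t) with (y + IZR i * T) by lra.
    apply periodic_Z, k_periodic.
  - rewrite plus_IZR, mult_IZR in Hj. replace (y + t) with (y + T / 2 + IZR i * T) by lra.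
    rewrite periodic_Z by exact k_periodic. apply k_antiperiodic.
Qed.

Lemma k_shift_sum_proportional (s : R) :
  exists c, forall y, k (y + s) + k (y - s) = c * k y.
Proof.
  destruct (k_cone_add (fun y => k (y + s)) (fun y => k (y - s))) as (a & t & Ha & Hsum).
  - exists 1, s. split; [lra|]. intros; ring.
  - exists 1, (- s). split; [lra|]. intros; unfold Rminus; ring.
  - cbv beta in Hsum. destruct (Rle_lt_or_eq_dec 0 a Ha) as [Hapos|<-].
    (* the left-hand side is even in y, so t is a centre of symmetry of k *)
    + assert (Hsym : forall y, k (t - y) = k (t + y)).
      { intros y. apply (Rmult_eq_reg_l a); [|lra].
        replace (t - y) with (- y + t) by ring. replace (t + y) with (y + t) by ring.
        rewrite <- !Hsum, <- (k_even (- y + s)), <- (k_even (- y - s)).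
        replace (- (- y + s)) with (y - s) by ring. replace (- (- y - s)) with (y + s) by ring.
        ring. }
      destruct (k_symmetry_center t Hsym) as [Hp|Hp]; [exists a | exists (- a)];
        intros y; rewrite Hsum, Hp; ring.
    + exists 0. intros y. rewrite Hsum. ring.
Qed.

Lemma k_dalembert (x s : R) : k (x + s) + k (x - s) = 2 * k s * k x / k 0.
Proof.
  pose proof k0_pos as Hk0.
  destruct (k_shift_sum_proportional s) as [c Hc].
  pose proof (Hc 0) as H0. rewrite Rplus_0_l, Rminus_0_l, k_even in H0.
  assert (Hc0 : c = 2 * k s / k 0).
  { apply (Rmult_eq_reg_r (k 0)); [|lra]. unfold Rdiv. rewrite Rmult_assoc, Rinv_l; lra. }
  rewrite Hc, Hc0. field. lra.
Qed.

Lemma k_nonneg_quarter (y : R) : 0 <= y <= T / 4 -> 0 <= k y.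
Proof.
  intros Hy. pose proof k0_pos as Hk0.
  destruct (Rle_or_lt 0 (k y)) as [|Hneg]; [assumption|]. exfalso.
  destruct (IVT_cor k 0 y k_cont) as [z [Hz Hkz]]; [lra | nra |].
  (* a zero z in [0, y] gives k (2 z) = - k 0, making 2 z + T / 2 a period *)
  pose proof (k_dalembert z z) as D.
  rewrite Hkz, Rminus_diag in D. replace (2 * 0 * 0 / k 0) with 0 in D by (field; lra).
  destruct (k_max_at_periods (z + z + T / 2)) as [j Hj]; [rewrite k_antiperiodic; lra|].
  assert (H0 : 0 < IZR j) by (apply (Rmult_lt_reg_r T); lra).
  assert (H1 : IZR j <= 1) by (apply (Rmult_le_reg_r T); lra).
  apply lt_IZR in H0. apply le_IZR in H1.
  assert (j = 1%Z) as -> by lia.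
  assert (z = y) as -> by lra. lra.
Qed.

Lemma k_dyadic (n : nat) : k (T / 2 ^ S n) = k 0 * cos (PI / 2 ^ n).
Proof.
  pose proof k0_pos as Hk0. pose proof PI_RGT_0 as Hpi.
  induction n as [|n IH].
  - replace (T / 2 ^ 1) with (0 + T / 2) by (simpl; field). rewrite k_antiperiodic.
    replace (PI / 2 ^ 0) with PI by (simpl; field). rewrite cos_PI. ring.
  - assert (H2n : 2 ^ n <> 0) by (apply pow_nonzero; lra).
    apply (dalembert_half k (k 0) Hk0 eq_refl k_dalembert).
    + apply k_nonneg_quarter.
      replace (T / 2 ^ S (S n)) with (T / 4 / 2 ^ n) by (simpl; field; auto).
      apply div_pow2_bounds. lra.
    + replace (PI / 2 ^ S n) with (PI / 2 / 2 ^ n) by (simpl; field; auto).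
      pose proof (div_pow2_bounds (PI / 2) n). apply cos_ge_0; lra.
    + replace (2 * (T / 2 ^ S (S n))) with (T / 2 ^ S n) by (simpl; field; auto).
      replace (2 * (PI / 2 ^ S n)) with (PI / 2 ^ n) by (simpl; field; auto).
      exact IH.
Qed.

Lemma k_eq_cos (x : R) : k x = k 0 * cos (2 * PI * x / T).
Proof.
  revert x. apply (eq_on_dyadics _ _ T T_pos k_cont).
  - intros x. apply derivable_continuous_pt. reg.
  - intros m p. assert (H2p : 2 ^ p <> 0) by (apply pow_nonzero; lra).
    replace (IZR m * (T / 2 ^ p)) with (IZR (2 * m) * (T / 2 ^ S p))
      by (rewrite mult_IZR; simpl; field; auto).
    rewrite (dalembert_mult k (k 0) k0_pos eq_refl k_dalembert _ _ (k_dyadic p)).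
    f_equal. f_equal. simpl. field. split; [auto | lra].
Qed.

End NormalizedGenerator.

Lemma gvM_family_affine (lmin lmax mu c x0 : R) (h g : R -> R) : 0 < c ->
  (forall y, h y = mu + c * g (y - x0)) ->
  forall f, gvM_family lmin lmax h f <-> gvM_family lmin lmax g f.
Proof.
  intros Hc Hh f. split; intros (a & b & s & Ha & Hf).
  - exists (a * c), (b + a * mu), (s + x0). split; [nra|].
    intros l Hl. rewrite Hf, Hh by exact Hl. f_equal.
    replace (l - s - x0) with (l - (s + x0)) by ring. ring.
  - exists (a / c), (b - a * mu / c), (s - x0). split.
    { apply Rmult_le_pos; [lra | left; apply Rinv_0_lt_compat; lra]. }
    intros l Hl. rewrite Hf, Hh by exact Hl. f_equal.
    replace (l - (s - x0) - x0) with (l - s) by ring. field. lra.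
Qed.

Section MultClosedGenerator.
Variables (lmin lmax : R) (h : R -> R).
Let T := lmax - lmin.
Hypothesis lmin_lt_lmax : lmin < lmax.
Hypothesis h_cont : continuity h.
Hypothesis h_periodic : forall x, h (x + T) = h x.
Hypothesis h_unique_max : unique_max_on_period lmin lmax h.
Hypothesis h_mult_closed : mult_closed (gvM_family lmin lmax h).

Let T_pos : 0 < T := proj2 (Rlt_0_minus lmin lmax) lmin_lt_lmax.

Lemma h_add_closed (a1 a2 s1 s2 : R) : 0 <= a1 -> 0 <= a2 -> exists a b s, 0 <= a /\
  forall x, a1 * h (x - s1) + a2 * h (x - s2) = b + a * h (x - s).
Proof.
  intros H1 H2.
  destruct (h_mult_closed (fun l => exp (0 + a1 * h (l - s1))) (fun l => exp (0 + a2 * h (l - s2))))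
    as (a & b & s & Ha & Hf).
  - exists a1, 0, s1. split; [exact H1 | reflexivity].
  - exists a2, 0, s2. split; [exact H2 | reflexivity].
  - exists a, b, s. split; [exact Ha|].
    apply (periodic_ext lmin T); [exact T_pos | intros x .. |].
    + replace (x + T - s1) with (x - s1 + T) by ring.
      replace (x + T - s2) with (x - s2 + T) by ring. now rewrite !h_periodic.
    + replace (x + T - s) with (x - s + T) by ring. now rewrite h_periodic.
    + intros l Hl. apply exp_inv. rewrite <- Hf by (unfold T in Hl; lra).
      rewrite <- exp_plus. f_equal. ring.
Qed.

Lemma h_global_max : exists x0, (forall y, h y <= h x0) /\
  (forall y, h y = h x0 -> exists j : Z, y = x0 + IZR j * T).
Proof.
  destruct h_unique_max as (x0 & [Hx0 Hmax] & Huniq).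
  assert (Hred : forall y, exists j : Z, lmin <= y - IZR j * T < lmax /\ h (y - IZR j * T) = h y).
  { intros y. destruct (exists_floor_multiple T (y - lmin) T_pos) as [j Hj]. exists j.
    split; [unfold T in *; lra|].
    rewrite <- (periodic_Z h T h_periodic j). f_equal. ring. }
  exists x0. split.
  - intros y. destruct (Hred y) as (j & Hj & <-). apply Hmax, Hj.
  - intros y Hy. destruct (Hred y) as (j & Hj & Hhj). exists j.
    assert (x0 = y - IZR j * T); [|lra].
    apply Huniq. split; [exact Hj|]. intros z Hz. rewrite Hhj, Hy. apply Hmax, Hz.
Qed.

Lemma h_half_period_sum : exists mu, forall x, h x + h (x + T / 2) = 2 * mu.
Proof.
  destruct h_global_max as (x0 & _ & Hx0).
  destruct (h_add_closed 1 1 0 (- (T / 2))) as (a & b & s & Ha & Hab); try lra.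
  assert (Hsum : forall x, h x + h (x + T / 2) = b + a * h (x - s)).
  { intros x. rewrite <- Hab. replace (x - 0) with x by ring.
    replace (x - - (T / 2)) with (x + T / 2) by ring. ring. }
  exists (b / 2). destruct (Rle_lt_or_eq_dec 0 a Ha) as [Hapos | <-].
  2: { intros x. rewrite Hsum. lra. }
  (* a nonconstant translate of h would inherit the period T / 2 of the sum *)
  exfalso.
  assert (Hhalf : forall y, h (y + T / 2) = h y).
  { intros y. apply (Rmult_eq_reg_l a); [|lra].
    pose proof (Hsum (y + s)) as E1. pose proof (Hsum (y + s + T / 2)) as E2.
    replace (y + s + T / 2 + T / 2) with (y + s + T) in E2 by field. rewrite h_periodic in E2.
    replace (y + s - s) with y in E1 by ring.
    replace (y + s + T / 2 - s) with (y + T / 2) in E2 by ring. lra. }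
  destruct (Hx0 (x0 + T / 2) (Hhalf x0)) as [j Hj].
  apply (half_period_not_period T j T_pos). lra.
Qed.

Section Centered.
Variables (x0 mu : R).
Hypothesis x0_max : forall y, h y <= h x0.
Hypothesis x0_max_only : forall y, h y = h x0 -> exists j : Z, y = x0 + IZR j * T.
Hypothesis mu_half_period_sum : forall x, h x + h (x + T / 2) = 2 * mu.

Definition centered (y : R) : R := h (y + x0) - mu.

Lemma centered_cont : continuity centered.
Proof.
  intros y. apply (continuity_pt_minus (fun y => h (y + x0)) (fun _ => mu)).
  - change (continuity_pt (comp h (fun y => y + x0)) y).
    apply continuity_pt_comp; [apply derivable_continuous_pt; reg | apply h_cont].
  - apply continuity_pt_const. intros ? ?. reflexivity.
Qed.

Lemma centered_periodic (y : R) : centered (y + T) = centered y.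
Proof. unfold centered. replace (y + T + x0) with (y + x0 + T) by ring. now rewrite h_periodic. Qed.

Lemma centered_antiperiodic (y : R) : centered (y + T / 2) = - centered y.
Proof.
  unfold centered. pose proof (mu_half_period_sum (y + x0)).
  replace (y + T / 2 + x0) with (y + x0 + T / 2) by ring. lra.
Qed.

Lemma centered_le_0 (y : R) : centered y <= centered 0.
Proof. unfold centered. rewrite Rplus_0_l. pose proof (x0_max (y + x0)). lra. Qed.

Lemma centered_max_at_periods (z : R) : centered z = centered 0 -> exists j : Z, z = IZR j * T.
Proof.
  unfold centered. rewrite Rplus_0_l. intros E.
  destruct (x0_max_only (z + x0)) as [j Hj]; [lra|]. exists j. lra.
Qed.

Lemma centered_cone_add (v w : R -> R) : scaled_shift centered v -> scaled_shift centered w ->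
  scaled_shift centered (fun x => v x + w x).
Proof.
  intros (a1 & t1 & H1 & Hv) (a2 & t2 & H2 & Hw).
  destruct (h_add_closed a1 a2 (- (t1 + x0)) (- (t2 + x0)) H1 H2) as (a & b & s & Ha & Hs).
  set (C := b + a * mu - (a1 + a2) * mu).
  assert (Hsum : forall x, v x + w x = C + a * centered (x - s - x0)).
  { intros x. rewrite Hv, Hw. unfold C, centered. pose proof (Hs x) as E.
    replace (x - - (t1 + x0)) with (x + t1 + x0) in E by ring.
    replace (x - - (t2 + x0)) with (x + t2 + x0) in E by ring.
    replace (x - s - x0 + x0) with (x - s) by ring. lra. }
  (* C vanishes because both v + w and centered are T/2-antiperiodic *)
  assert (HC : C = 0).
  { pose proof (Hsum 0) as E0. pose proof (Hsum (0 + T / 2)) as E1.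
    rewrite Hv, Hw in E0, E1.
    replace (0 + T / 2 + t1) with (0 + t1 + T / 2) in E1 by ring.
    replace (0 + T / 2 + t2) with (0 + t2 + T / 2) in E1 by ring.
    replace (0 + T / 2 - s - x0) with (0 - s - x0 + T / 2) in E1 by ring.
    rewrite !centered_antiperiodic in E1. lra. }
  exists a, (- s - x0). split; [exact Ha|]. intros x. rewrite Hsum, HC.
  replace (x + (- s - x0)) with (x - s - x0) by ring. ring.
Qed.

End Centered.

Lemma h_eq_cos : exists mu c x0, 0 < c /\ forall y, h y = mu + c * vM_cos lmin lmax (y - x0).
Proof.
  destruct h_global_max as (x0 & Hmax & Hmax_only).
  destruct h_half_period_sum as [mu Hmu].
  pose proof (k0_pos T (centered x0 mu) T_pos (centered_antiperiodic x0 mu Hmu)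
    (centered_le_0 x0 mu Hmax) (centered_max_at_periods x0 mu Hmax_only)) as Hc.
  pose proof (k_eq_cos T (centered x0 mu) T_pos (centered_cont x0 mu) (centered_periodic x0 mu)
    (centered_antiperiodic x0 mu Hmu) (centered_le_0 x0 mu Hmax)
    (centered_max_at_periods x0 mu Hmax_only) (centered_cone_add x0 mu Hmu)) as Hcos.
  exists mu, (centered x0 mu 0), x0. split; [exact Hc|]. intros y.
  unfold vM_cos. fold T. rewrite <- Hcos. unfold centered.
  replace (y - x0 + x0) with y by ring. ring.
Qed.

End MultClosedGenerator.

Theorem proposition3 (lmin lmax : R) (h : R -> R) :
  lmin < lmax ->
  continuity h ->
  (forall x, h (x + (lmax - lmin)) = h x) ->
  unique_max_on_period lmin lmax h ->
  mult_closed (gvM_family lmin lmax h) ->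
  forall f : R -> R,
    gvM_family lmin lmax h f <-> gvM_family lmin lmax (vM_cos lmin lmax) f.
Proof.
  intros Hlt Hcont Hper Hmax Hclosed.
  destruct (h_eq_cos lmin lmax h Hlt Hcont Hper Hmax Hclosed) as (mu & c & x0 & Hc & Hh).
  exact (gvM_family_affine lmin lmax mu c x0 h _ Hc Hh).
Qed.
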